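(* Let $K^f$ and $K^s$ be $n_s\times n_s$ Markov chain generators. Suppose $K^f=\mathrm{diag}(K^f_1,\dots,K^f_l)$ is block diagonal, and let $K^s$ be partitioned conformally into blocks $K^s_{i,j}$, where $K^s_{i,i}=K^s_i$. Let $L$ and $\Pi$ be the matrices constructed from $K^f$ as described in the context. Then $\tilde K=LK^s\Pi$ is the generator of a Markov chain. That is, every column of $\tilde K$ sums to zero and every off-diagonal entry of $\tilde K$ is nonnegative.
   Context: A real square matrix is a Markov chain generator if all its off-diagonal entries are nonnegative and all its column sums are zero. Each block $K^f_i$ is an $m_i\times m_i$ Markov generator. It describes fast transitions among the states of the $i$-th fast component. Its directed graph has an edge $q\to p$ iff $(K^f_i)_{pq}>0$. Decompose this graph into strongly connected components, classified as follows: - absorbing: no edges leave it to another strong component; - sources: no edges enter it from another strong component, but some leave; - internal: all others. Order the states of component $i$ as follows: first the $p_i$ isolated absorbing states (absorbing strong components consisting of a single state); then the states of the $q_i$ absorbing strong components having at least two states, component by component; then states of internal strong components; then states of sources. With this ordering, $$K^f_i=\begin{pmatrix}K^{f,ab}_i&K^{f,ab,in}_i&K^{f,ab,so}_i\\0&K^{f,in}_i&K^{f,in,so}_i\\0&0&K^{f,so}_i\end{pmatrix},$$ where $K^{f,ab}_i=\mathrm{diag}(0_{p_i},K^{f,ab}_{i,1},\dots,K^{f,ab}_{i,q_i})$. Here $K^{f,ab}_{i,j}$ is the $m^{ab}_{i,j}\times m^{ab}_{i,j}$ generator restricted to the $j$-th absorbing strong component with at least two states. The blocks $K^{f,in}_i$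 and $K^{f,so}_i$ are nonsingular. Let $\pi^{ab}_{i,j}$ be the unique probability vector with $K^{f,ab}_{i,j}\pi^{ab}_{i,j}=0$. Define $$\tilde\Pi_i=\mathrm{diag}(I_{p_i},\pi^{ab}_{i,1},\dots,\pi^{ab}_{i,q_i}).$$ Let $\Pi_i$ be $\tilde\Pi_i$ augmented below by zero rows for all internal and source states, and set $\Pi=\mathrm{diag}(\Pi_1,\dots,\Pi_l)$. Define $$\tilde L_i=\mathrm{diag}(I_{p_i},\mathbf 1^T_{m^{ab}_{i,1}},\dots,\mathbf 1^T_{m^{ab}_{i,q_i}}),$$ where $\mathbf 1^T_k=[1,\dots,1]$ of length $k$. Further define $$A_i=-\tilde L_iK^{f,ab,in}_i(K^{f,in}_i)^{-1},\qquad B_i=-(\tilde L_iK^{f,ab,so}_i+A_iK^{f,in,so}_i)(K^{f,so}_i)^{-1},$$ $L_i=[\,\tilde L_i\mid A_i\mid B_i\,]$, and $L=\mathrm{diag}(L_1,\dots,L_l)$. Then $LK^f=0$ and $K^f\Pi=0$. *)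

From mathcomp Require Import all_boot all_order all_algebra.
Set Implicit Arguments. Unset Strict Implicit. Unset Printing Implicit Defensive.
Import Order.TTheory GRing.Theory Num.Theory.
Local Open Scope ring_scope.

Section Defs.
Variable R : realFieldType.

Definition generator (n : nat) (A : 'M[R]_n) : Prop :=
  (forall i j : 'I_n, i != j -> 0 <= A i j) /\
  (forall j : 'I_n, \sum_(i < n) A i j = 0).

Definition mxbdiag (l : nat) (p q : 'I_l -> nat)
    (B : forall i, 'M[R]_(p i, q i)) : 'M[R]_(\sum_i p i, \sum_i q i) :=
  \mxblock_(j, k) if j == k then conform_mx 0 (B j) else 0.

Section Block.
Variables (m : nat) (K : 'M[R]_m).

Definition edge : rel 'I_m := fun q p => 0 < K p q.
Definition reach : rel 'I_m := connect edge.

Definition scc (x : 'I_m) : {set 'I_m} :=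
  [set y | reach x y && reach y x].

Definition absorbing_state (x : 'I_m) : bool :=
  [forall y, forall z, ((y \in scc x) && edge y z) ==> (z \in scc x)].

Definition source_state (x : 'I_m) : bool :=
  ~~ absorbing_state x &&
  [forall y, forall z, ((z \in scc x) && edge y z) ==> (y \in scc x)].

Definition Ab : {set 'I_m} := [set x | absorbing_state x].
Definition So : {set 'I_m} := [set x | source_state x].
Definition In : {set 'I_m} :=
  [set x | ~~ absorbing_state x && ~~ source_state x].

Definition abs_classes : {set {set 'I_m}} := [set scc x | x in Ab].
Definition nred : nat := #|abs_classes|.
Definition cls (c : 'I_nred) : {set 'I_m} := enum_val c.

Definition subm (A B : {set 'I_m}) : 'M[R]_(#|A|, #|B|) :=
  \matrix_(a, b) K (enum_val a) (enum_val b).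

(* extension by zero of a matrix whose columns are indexed by A *)
Definition colext (r : nat) (A : {set 'I_m}) (M : 'M[R]_(r, #|A|))
  : 'M[R]_(r, m) := \matrix_(c, x) \sum_(a | enum_val a == x) M c a.

Definition Ltil : 'M[R]_(nred, #|Ab|) :=
  \matrix_(c, a) ((enum_val a \in cls c)%:R).

Definition Amx : 'M[R]_(nred, #|In|) :=
  - (Ltil *m subm Ab In *m invmx (subm In In)).

Definition Bmx : 'M[R]_(nred, #|So|) :=
  - ((Ltil *m subm Ab So + Amx *m subm In So) *m invmx (subm So So)).

(* L_i = [ \tilde L | A | B ] (columns in the original state order) *)
Definition Lblk : 'M[R]_(nred, m) :=
  colext Ltil + colext Amx + colext Bmx.

Definition stat_prob (C : {set 'I_m}) (v : 'I_m -> R) : Prop :=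
  [/\ forall x, x \in C -> 0 <= v x,
      \sum_(x in C) v x = 1 &
      forall y, y \in C -> \sum_(x in C) K y x * v x = 0].

Definition Piblk (pi : {set 'I_m} -> 'I_m -> R) : 'M[R]_(m, nred) :=
  \matrix_(x, c) (if x \in cls c then pi (cls c) x else 0).

End Block.
End Defs.

From mathcomp Require Import all_boot all_order all_algebra.
From mathcomp Require Import lra.
Set Implicit Arguments. Unset Strict Implicit. Unset Printing Implicit Defensive.
Import Order.TTheory GRing.Theory Num.Theory.
Local Open Scope ring_scope.

(* The matrix L is column stochastic.  Its block [~L] is a 0/1 indicator of
   the absorbing classes; [A] and [B] are nonnegative because the restrictions
   of K^f to internal and to source states satisfy a minimum principle (no
   nonempty set of such states is closed and loses no mass, since every state
   reaches an absorbing one), and their column sums are 1 because the columns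
   of K^f sum to zero.  Moreover L_{c x} Pi_{x d} = 0 for c <> d, as Pi only
   charges absorbing states, on which L is the class indicator.  Hence the
   off-diagonal entries of L K^s Pi are nonnegative combinations of
   off-diagonal entries of K^s, and its column sums vanish because L
   preserves column sums. *)

Definition closed_conservative (R : realFieldType) n (N : 'M[R]_n)
    (M : {set 'I_n}) : Prop :=
  forall j, j \in M -> \sum_i N i j = 0 /\ forall i, 0 < N i j -> i \in M.

Section MinimumPrinciple.
Variables (R : realFieldType) (n : nat) (N : 'M[R]_n).
Hypothesis N_offdiag_ge0 : forall i j, i != j -> 0 <= N i j.
Hypothesis N_colsum_le0 : forall j, \sum_i N i j <= 0.
Hypothesis N_leaky : forall M, closed_conservative N M -> M = set0.

(* If [v] had a negative minimum, the set of indices where it is attained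
   would be closed and conservative. *)
Lemma row_ge0_of_mulmx_le0 (v : 'rV[R]_n) :
  (forall j, (v *m N) 0 j <= 0) -> forall j, 0 <= v 0 j.
Proof.
move=> vN_le0 j; rewrite leNgt; apply/negP => vj_lt0.
case: (@arg_minP _ _ _ j predT (fun k => v 0 k)) => // k _ k_min.
set mn := v 0 k in k_min.
have mn_lt0 : mn < 0 by apply: le_lt_trans (k_min j _) vj_lt0.
pose M := [set i | v 0 i == mn].
suff : M = set0 by move/setP/(_ k); rewrite !inE eqxx.
apply: N_leaky => i; rewrite inE => /eqP vi.
have shift_ge0 a : 0 <= (v 0 a - mn) * N a i.
  case: (eqVneq a i) => [->|ne]; first by rewrite vi subrr mul0r.
  by apply: mulr_ge0; [rewrite subr_ge0; apply: k_min | apply: N_offdiag_ge0].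
have vN_split : (v *m N) 0 i = \sum_a (v 0 a - mn) * N a i + mn * \sum_a N a i.
  rewrite mxE mulr_sumr -big_split /=; apply: eq_bigr => a _.
  by rewrite mulrBl subrK.
have S1 : 0 <= \sum_a (v 0 a - mn) * N a i by apply: sumr_ge0.
have S2 : 0 <= mn * \sum_a N a i.
  by apply: mulr_le0; [apply: ltW | apply: N_colsum_le0].
have := vN_le0 i; rewrite vN_split => vN_i.
have Z1 : \sum_a (v 0 a - mn) * N a i = 0 by lra.
have /eqP : mn * \sum_a N a i = 0 by lra.
rewrite mulf_eq0 (lt_eqF mn_lt0) => /eqP colsum0; split=> // a Na_gt0.
have /eqP : (v 0 a - mn) * N a i = 0.
  by apply: (psumr_eq0P _ Z1) => // b _; apply: shift_ge0.
by rewrite mulf_eq0 (gt_eqF Na_gt0) orbF subr_eq0 inE.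
Qed.

Lemma mx_ge0_of_mulmx_le0 r (X : 'M[R]_(r, n)) :
  (forall c j, (X *m N) c j <= 0) -> forall c j, 0 <= X c j.
Proof.
move=> XN_le0 c j; have -> : X c j = row c X 0 j by rewrite mxE.
by apply: row_ge0_of_mulmx_le0 => k; rewrite -row_mul mxE.
Qed.

Lemma leaky_unitmx : N \in unitmx.
Proof.
rewrite unitmxE unitfE; apply/negP => /det0P [v /negP v_neq0 vN0].
apply: v_neq0; apply/eqP/rowP => j; rewrite mxE; apply/le_anti/andP; split.
  have -> : v 0 j = - (- v) 0 j by rewrite mxE opprK.
  rewrite oppr_le0.
  by apply: row_ge0_of_mulmx_le0 => k; rewrite mulNmx vN0 oppr0 mxE.
by apply: row_ge0_of_mulmx_le0 => k; rewrite vN0 mxE.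
Qed.

End MinimumPrinciple.

Definition col_stochastic (R : realFieldType) r n (M : 'M[R]_(r, n)) : Prop :=
  (forall i j, 0 <= M i j) /\ (forall j, \sum_i M i j = 1).

Section MatrixFacts.
Variable R : realFieldType.

Lemma mulmx_ge0 r n p (X : 'M[R]_(r, n)) (Y : 'M[R]_(n, p)) :
  (forall i j, 0 <= X i j) -> (forall i j, 0 <= Y i j) ->
  forall i j, 0 <= (X *m Y) i j.
Proof.
by move=> X_ge0 Y_ge0 i j; rewrite mxE; apply: sumr_ge0 => k _; apply: mulr_ge0.
Qed.

Lemma const1_mulmx r n (M : 'M[R]_(r, n)) j :
  ((const_mx 1 : 'rV[R]_r) *m M) 0 j = \sum_c M c j.
Proof. by rewrite mxE; apply: eq_bigr => c _; rewrite mxE mul1r. Qed.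

Lemma colsum_const1 r n (M : 'M[R]_(r, n)) :
  (forall j, \sum_c M c j = 1) <-> (const_mx 1 : 'rV[R]_r) *m M = const_mx 1.
Proof.
split=> [colsum1|M1 j].
  by apply/rowP => j; rewrite const1_mulmx colsum1 mxE.
by rewrite -const1_mulmx M1 mxE.
Qed.

End MatrixFacts.

Section ColumnExtension.
Variables (R : realFieldType) (m r : nat) (A : {set 'I_m}) (M : 'M[R]_(r, #|A|)).

Lemma colext_ge0 c x : (forall c a, 0 <= M c a) -> 0 <= colext M c x.
Proof. by move=> M_ge0; rewrite mxE; apply: sumr_ge0. Qed.

Lemma colext_out c x : x \notin A -> colext M c x = 0.
Proof.
by move=> xA; rewrite mxE big1 // => a /eqP ax; move: xA; rewrite -ax enum_valP.
Qed.

Lemma colext_colsum :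
  (forall a, \sum_c M c a = 1) -> forall x, \sum_c colext M c x = (x \in A)%:R.
Proof.
move=> colsum1 x; under eq_bigr do rewrite mxE.
rewrite exchange_big /=; have [xA|xA] := boolP (x \in A); last first.
  by rewrite big1 // => a /eqP ax; move: xA; rewrite -ax enum_valP.
rewrite (big_pred1 (enum_rank_in xA x)) ?colsum1 // => a.
apply/eqP/eqP => [ax|->]; last by rewrite enum_rankK_in.
by apply: enum_val_inj; rewrite enum_rankK_in.
Qed.

End ColumnExtension.

Section StrongComponents.
Variables (R : realFieldType) (m : nat) (K : 'M[R]_m).

Lemma scc_refl x : x \in scc K x.
Proof. by rewrite inE /reach connect0. Qed.

Lemma scc_eq x y : y \in scc K x -> scc K y = scc K x.
Proof.
rewrite inE => /andP [xy yx]; apply/setP => z; rewrite !inE.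
apply/andP/andP => [[yz zy]|[xz zx]]; split; rewrite /reach.
- exact: connect_trans xy yz.
- exact: connect_trans zy yx.
- exact: connect_trans yx xz.
- exact: connect_trans zx xy.
Qed.

Lemma absorbing_scc x y :
  y \in scc K x -> absorbing_state K y = absorbing_state K x.
Proof. by move=> xy; rewrite /absorbing_state (scc_eq xy). Qed.

Lemma source_scc x y : y \in scc K x -> source_state K y = source_state K x.
Proof. by move=> xy; rewrite /source_state (absorbing_scc xy) (scc_eq xy). Qed.

Lemma reach_closed (A : {set 'I_m}) :
  (forall z y, z \in A -> edge K z y -> y \in A) ->
  forall z y, z \in A -> reach K z y -> y \in A.
Proof.
move=> A_closed z y zA /connectP [p p_path ->].
elim: p z zA p_path => //= a p IHp z zA /andP [za p_path].
exact: IHp (A_closed _ _ zA za) p_path.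
Qed.

(* Induction on the number of states reachable from [x]: leaving the strong
   component of [x] strictly shrinks that set. *)
Lemma reach_absorbing x : exists2 y, reach K x y & absorbing_state K y.
Proof.
move: {2}#|_| (leqnn #|[set y | reach K x y]|) => n.
elim: n x => [|n IHn] x reach_le.
  have : x \in [set y | reach K x y] by rewrite inE /reach connect0.
  by move: reach_le; rewrite leqn0 cards_eq0 => /eqP ->; rewrite inE.
have [x_abs|] := boolP (absorbing_state K x).
  by exists x; rewrite // /reach connect0.
case/forallPn => y /forallPn [z]; rewrite negb_imply => /andP [/andP [xy yz] zx].
have xz : reach K x z.
  by move: xy; rewrite inE => /andP [xy _]; apply: connect_trans xy (connect1 yz).
have [w zw w_abs] : exists2 w, reach K z w & absorbing_state K w.
  apply: IHn; rewrite -ltnS; apply: leq_trans reach_le; apply: proper_card.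
  apply/properP; split.
    by apply/subsetP => w; rewrite !inE; apply: connect_trans xz.
  exists x; rewrite !inE ?/reach ?connect0 //.
  by apply: contra zx => zx; rewrite inE xz.
by exists w => //; apply: connect_trans xz zw.
Qed.

Lemma In_nabs x : x \in In K -> ~~ absorbing_state K x.
Proof. by rewrite inE => /andP []. Qed.

Lemma So_nabs x : x \in So K -> ~~ absorbing_state K x.
Proof. by rewrite inE => /andP []. Qed.

Lemma In_notin_So x : x \in In K -> x \notin So K.
Proof. by rewrite !inE => /andP []. Qed.

Lemma Ab_notin_In x : x \in Ab K -> x \notin In K.
Proof. by rewrite inE => x_abs; apply: contraL x_abs; apply: In_nabs. Qed.

Lemma Ab_notin_So x : x \in Ab K -> x \notin So K.
Proof. by rewrite inE => x_abs; apply: contraL x_abs; apply: So_nabs. Qed.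

Lemma sum_states (F : 'I_m -> R) :
  \sum_y F y =
  \sum_(y in Ab K) F y + \sum_(y in In K) F y + \sum_(y in So K) F y.
Proof.
rewrite (bigID (mem (Ab K))) /=.
rewrite (bigID (mem (So K)) (fun y => y \notin Ab K)) /= -addrA.
congr (_ + _); rewrite addrC; congr (_ + _); apply: eq_bigl => y; rewrite !inE.
  by rewrite andbC.
by rewrite /source_state andbA andbb.
Qed.

Lemma mem_cls x (c : 'I_(nred K)) : x \in cls c -> cls c = scc K x /\ x \in Ab K.
Proof.
case/imsetP: (enum_valP c) => y y_abs; rewrite -/(cls c) => -> yx.
by rewrite (scc_eq yx); move: y_abs; rewrite !inE (absorbing_scc yx).
Qed.

Lemma cls_inj x (c d : 'I_(nred K)) : x \in cls c -> x \in cls d -> c = d.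
Proof.
move=> /mem_cls [cls_c _] /mem_cls [cls_d _]; apply: enum_val_inj.
by rewrite -/(cls c) -/(cls d) cls_c cls_d.
Qed.

Lemma sum_mem_cls x : x \in Ab K -> \sum_(c < nred K) (x \in cls c)%:R = 1 :> R.
Proof.
move=> x_abs; have scc_x : scc K x \in abs_classes K by apply/imsetP; exists x.
pose cx := enum_rank_in scc_x (scc K x).
have cls_cx : cls cx = scc K x by rewrite /cls enum_rankK_in.
rewrite (bigD1 cx) //= cls_cx scc_refl big1 ?addr0 // => c c_neq.
apply/eqP; rewrite pnatr_eq0 eqb0; apply: contra c_neq => x_c.
by rewrite (@cls_inj x c cx) // cls_cx scc_refl.
Qed.

Lemma LblkE c x :
  Lblk K c x = colext (Ltil K) c x + colext (Amx K) c x + colext (Bmx K) c x.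
Proof. by rewrite /Lblk [LHS]mxE [X in X + _]mxE. Qed.

Lemma Lblk_cls x (c d : 'I_(nred K)) : x \in cls d -> c != d -> Lblk K c x = 0.
Proof.
move=> x_d cd; have [_ x_abs] := mem_cls x_d.
rewrite LblkE (colext_out _ _ (Ab_notin_In x_abs)).
rewrite (colext_out _ _ (Ab_notin_So x_abs)) !addr0 mxE big1 // => a /eqP ax.
rewrite mxE ax; have [x_c|] := boolP (x \in cls c) => //.
by move: cd; rewrite (cls_inj x_c x_d) eqxx.
Qed.

Section StationaryDistributions.
Variable pi : {set 'I_m} -> 'I_m -> R.

Lemma Piblk_ge0 :
  (forall C, C \in abs_classes K -> stat_prob K C (pi C)) ->
  forall x c, 0 <= Piblk K pi x c.
Proof.
move=> pi_stat x c; rewrite mxE; case: ifP => // x_c.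
by have [pi_ge0 _ _] := pi_stat _ (enum_valP c); apply: pi_ge0.
Qed.

Lemma Lblk_Piblk_offdiag x (c d : 'I_(nred K)) :
  c != d -> Lblk K c x * Piblk K pi x d = 0.
Proof.
move=> cd; rewrite [Piblk _ _ _ _]mxE; case: ifP => x_d; last by rewrite mulr0.
by rewrite (Lblk_cls x_d cd) mul0r.
Qed.

End StationaryDistributions.
End StrongComponents.

Section GeneratorBlock.
Variables (R : realFieldType) (m : nat) (K : 'M[R]_m).
Hypothesis K_gen : generator K.

Let K_offdiag_ge0 : forall x y, x != y -> 0 <= K x y := proj1 K_gen.
Let K_colsum0 : forall y, \sum_x K x y = 0 := proj2 K_gen.

(* An edge from an internal state into a source would put both in the same
   strong component. *)
Lemma K_So_In y x : y \in So K -> x \in In K -> K y x = 0.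
Proof.
move=> yS xI; have yx : y != x by apply: contraTneq yS => ->; apply: In_notin_So.
have := K_offdiag_ge0 yx; rewrite le0r => /orP [/eqP //|xy].
have := yS; rewrite inE => /andP [_ /forallP /(_ x) /forallP /(_ y)].
rewrite scc_refl /= => /implyP /(_ xy) x_scc.
by move: yS (In_notin_So xI); rewrite !inE (source_scc x_scc) => ->.
Qed.

Lemma subm_ge0 (A B : {set 'I_m}) :
  (forall x, x \in A -> x \notin B) -> forall a b, 0 <= subm K A B a b.
Proof.
move=> AB a b; rewrite mxE; apply: K_offdiag_ge0.
by apply: contraTneq (AB _ (enum_valP a)) => ->; rewrite negbK enum_valP.
Qed.

Lemma sum_subm (A B : {set 'I_m}) b :
  \sum_a subm K A B a b = \sum_(y in A) K y (enum_val b).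
Proof.
by rewrite [RHS](big_enum_val (A := mem A)); apply: eq_bigr => a _; rewrite mxE.
Qed.

Section NonAbsorbing.
Variable S : {set 'I_m}.
Hypothesis S_nabs : forall x, x \in S -> ~~ absorbing_state K x.

Lemma outflow_ge0 x : x \in S -> 0 <= \sum_(y | y \notin S) K y x.
Proof.
move=> xS; apply: sumr_ge0 => y yS; apply: K_offdiag_ge0.
by apply: contraNneq yS => ->.
Qed.

Lemma sum_subm_outflow b :
  \sum_a subm K S S a b + \sum_(y | y \notin S) K y (enum_val b) = 0.
Proof.
by rewrite sum_subm -[RHS](K_colsum0 (enum_val b)) [RHS](bigID [in S]).
Qed.

(* A closed conservative set of [S] would be closed in the whole graph, hence
   would contain an absorbing state. *)
Lemma subm_leaky M : closed_conservative (subm K S S) M -> M = set0.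
Proof.
move=> M_cc; have [//|[a aM]] := set_0Vmem M.
have M_closed z y : z \in enum_val @: M -> edge K z y -> y \in enum_val @: M.
  case/imsetP => b bM -> zy; have [colsum0 M_out] := M_cc b bM.
  have [yS|yS] := boolP (y \in S).
    apply/imsetP; exists (enum_rank_in yS y); last by rewrite enum_rankK_in.
    by apply: M_out; rewrite mxE enum_rankK_in.
  have := sum_subm_outflow b; rewrite colsum0 add0r => out0.
  have : K y (enum_val b) = 0.
    apply: (psumr_eq0P _ out0) => // w wS; apply: K_offdiag_ge0.
    by apply: contraNneq wS => ->; apply: enum_valP.
  by move: zy; rewrite /edge => /gt_eqF/eqP.
have [y ay y_abs] := reach_absorbing K (enum_val a).
have /imsetP [b _ yb] : y \in enum_val @: M.
  by apply: reach_closed M_closed _ _ _ ay; apply: imset_f.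
by move: (S_nabs (enum_valP b)); rewrite -yb y_abs.
Qed.

Let subm_offdiag_ge0 a b : a != b -> 0 <= subm K S S a b.
Proof.
by move=> ab; rewrite mxE; apply: K_offdiag_ge0; rewrite (inj_eq enum_val_inj).
Qed.

Let subm_colsum_le0 b : \sum_a subm K S S a b <= 0.
Proof.
have := sum_subm_outflow b; have := outflow_ge0 (enum_valP b); lra.
Qed.

Lemma subm_unitmx : subm K S S \in unitmx.
Proof. exact: leaky_unitmx subm_offdiag_ge0 subm_colsum_le0 subm_leaky. Qed.

Lemma subm_mx_ge0 r (X : 'M[R]_(r, #|S|)) :
  (forall c j, (X *m subm K S S) c j <= 0) -> forall c j, 0 <= X c j.
Proof.
exact: (mx_ge0_of_mulmx_le0 subm_offdiag_ge0 subm_colsum_le0 subm_leaky).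
Qed.

End NonAbsorbing.

Lemma In_unitmx : subm K (In K) (In K) \in unitmx.
Proof. exact: subm_unitmx (@In_nabs _ _ K). Qed.

Lemma So_unitmx : subm K (So K) (So K) \in unitmx.
Proof. exact: subm_unitmx (@So_nabs _ _ K). Qed.

Lemma Ltil_stochastic : col_stochastic (Ltil K).
Proof.
split=> [c a|a]; first by rewrite mxE ler0n.
by rewrite -(sum_mem_cls (enum_valP a)); apply: eq_bigr => c _; rewrite mxE.
Qed.

Lemma const1_subm (A B : {set 'I_m}) b :
  ((const_mx 1 : 'rV_#|A|) *m subm K A B) 0 b = \sum_(y in A) K y (enum_val b).
Proof. by rewrite const1_mulmx sum_subm. Qed.

Lemma Amx_mulmx :
  Amx K *m subm K (In K) (In K) = - (Ltil K *m subm K (Ab K) (In K)).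
Proof. by rewrite /Amx mulNmx mulmxKV // In_unitmx. Qed.

Lemma Amx_stochastic : col_stochastic (Amx K).
Proof.
have [Ltil_ge0 /colsum_const1 Ltil1] := Ltil_stochastic.
split.
  apply: (subm_mx_ge0 (@In_nabs _ _ K)) => c b; rewrite Amx_mulmx mxE oppr_le0.
  by apply: mulmx_ge0 => //; apply: subm_ge0 => x /Ab_notin_In.
apply/colsum_const1; apply: (row_free_inj (A := subm K (In K) (In K))).
  by rewrite row_free_unit In_unitmx.
rewrite /= -mulmxA Amx_mulmx mulmxN mulmxA Ltil1; apply/rowP => j.
rewrite mxE !const1_subm; have := K_colsum0 (enum_val j); rewrite (sum_states K).
rewrite [\sum_(y in So K) _]big1 ?addr0 => [|y yS]; first lra.
by apply: K_So_In => //; apply: enum_valP.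
Qed.

Lemma Bmx_mulmx : Bmx K *m subm K (So K) (So K) =
  - (Ltil K *m subm K (Ab K) (So K) + Amx K *m subm K (In K) (So K)).
Proof. by rewrite /Bmx mulNmx mulmxKV // So_unitmx. Qed.

Lemma Bmx_stochastic : col_stochastic (Bmx K).
Proof.
have [Ltil_ge0 /colsum_const1 Ltil1] := Ltil_stochastic.
have [Amx_ge0 /colsum_const1 Amx1] := Amx_stochastic.
split.
  apply: (subm_mx_ge0 (@So_nabs _ _ K)) => c b; rewrite Bmx_mulmx mxE oppr_le0.
  by rewrite mxE; apply: addr_ge0; apply: mulmx_ge0 => //;
    apply: subm_ge0 => x; [move/Ab_notin_So | move/In_notin_So].
apply/colsum_const1; apply: (row_free_inj (A := subm K (So K) (So K))).
  by rewrite row_free_unit So_unitmx.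
rewrite /= -mulmxA Bmx_mulmx mulmxN mulmxDr !mulmxA Ltil1 Amx1; apply/rowP => j.
rewrite [LHS]mxE [X in - X]mxE !const1_subm.
by have := K_colsum0 (enum_val j); rewrite (sum_states K); lra.
Qed.

Lemma sum_state_classes x :
  (x \in Ab K)%:R + (x \in In K)%:R + (x \in So K)%:R = 1 :> R.
Proof.
have sum_eqx (P : pred 'I_m) : \sum_(y | P y) ((y == x)%:R : R) = (P x)%:R.
  rewrite big_mkcond (bigD1 x) //= eqxx big1 ?addr0; first by case: (P x).
  by move=> y yx; case: (P y); rewrite // (negbTE yx).
by have := sum_states K (fun y => (y == x)%:R); rewrite !sum_eqx.
Qed.

Lemma Lblk_stochastic : col_stochastic (Lblk K).
Proof.
have [Ltil_ge0 Ltil1] := Ltil_stochastic.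
have [Amx_ge0 Amx1] := Amx_stochastic.
have [Bmx_ge0 Bmx1] := Bmx_stochastic.
split=> [c x|x].
  by rewrite LblkE; do ![apply: addr_ge0]; apply: colext_ge0.
under eq_bigr do rewrite LblkE.
by rewrite !big_split /= !colext_colsum // sum_state_classes.
Qed.

End GeneratorBlock.

Section BlockDiagonal.
Variables (R : realFieldType) (l : nat).
Implicit Types (p q : 'I_l -> nat).

Lemma sum_Rank p (F : 'I_(\sum_i p i) -> R) :
  \sum_s F s = \sum_i \sum_(x : 'I_(p i)) F (tagnat.Rank i x).
Proof.
rewrite sig_big_dep /= (reindex (@tagnat.rank l p)) /=.
  by apply: eq_bigr => u _; rewrite tagnat.rankE.
exact: tagnat.rank_bij_on.
Qed.

Lemma RankP p (s : 'I_(\sum_i p i)) :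
  exists i (x : 'I_(p i)), s = tagnat.Rank i x.
Proof. by exists (tagnat.sig1 s), (tagnat.sig2 s); rewrite tagnat.sig2K. Qed.

Lemma eq_Rank_same p i (a b : 'I_(p i)) :
  (tagnat.Rank i a == tagnat.Rank i b) = (a == b).
Proof. by rewrite -val_eqE tagnat.eq_Rank eqxx. Qed.

Variables (p q : 'I_l -> nat) (B : forall i, 'M[R]_(p i, q i)).

Lemma mxbdiag_Rank i (x : 'I_(p i)) (y : 'I_(q i)) :
  mxbdiag B (tagnat.Rank i x) (tagnat.Rank i y) = B i x y.
Proof.
rewrite /mxbdiag /mxblock mxE /tagnat.sig1 /tagnat.sig2 /tagnat.Rank.
by rewrite !tagnat.rankK /= eqxx conform_mx_id.
Qed.

Lemma mxbdiag_Rank_neq i j (x : 'I_(p i)) (y : 'I_(q j)) :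
  i != j -> mxbdiag B (tagnat.Rank i x) (tagnat.Rank j y) = 0.
Proof.
move=> ij; rewrite /mxbdiag /mxblock mxE /tagnat.sig1 /tagnat.sig2 /tagnat.Rank.
by rewrite !tagnat.rankK /= (negbTE ij) mxE.
Qed.

Lemma mxbdiag_colsum j (y : 'I_(q j)) :
  \sum_s mxbdiag B s (tagnat.Rank j y) = \sum_x B j x y.
Proof.
rewrite sum_Rank (bigD1 j) //= [X in _ + X]big1 ?addr0; last first.
  by move=> i ij; apply: big1 => x _; apply: mxbdiag_Rank_neq.
by apply: eq_bigr => x _; rewrite mxbdiag_Rank.
Qed.

Lemma mxbdiag_ge0 :
  (forall i a b, 0 <= B i a b) -> forall s t, 0 <= mxbdiag B s t.
Proof.
move=> B_ge0 s t; have [i [x ->]] := RankP s; have [j [y ->]] := RankP t.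
have [ij|ij] := eqVneq i j; last by rewrite mxbdiag_Rank_neq.
by subst j; rewrite mxbdiag_Rank.
Qed.

Lemma mxbdiag_col_stochastic :
  (forall i, col_stochastic (B i)) -> col_stochastic (mxbdiag B).
Proof.
move=> B_st; split; first by apply: mxbdiag_ge0 => i; case: (B_st i).
move=> t; have [j [y ->]] := RankP t.
by rewrite mxbdiag_colsum; case: (B_st j).
Qed.

End BlockDiagonal.

Lemma mxdiag_generator (R : realFieldType) l (m : 'I_l -> nat)
    (K : forall i, 'M[R]_(m i)) :
  generator (\mxdiag_(i < l) K i) -> forall i, generator (K i).
Proof.
case; rewrite -/(mxbdiag K) => K_offdiag_ge0 K_colsum0 i; split.
  move=> a b ab; rewrite -mxbdiag_Rank; apply: K_offdiag_ge0.
  by rewrite eq_Rank_same.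
by move=> b; rewrite -mxbdiag_colsum.
Qed.

Lemma mxbdiag_mulmx_offdiag (R : realFieldType) l (p q : 'I_l -> nat)
    (L : forall i, 'M[R]_(q i, p i)) (P : forall i, 'M[R]_(p i, q i)) :
  (forall i c d x, c != d -> L i c x * P i x d = 0) ->
  forall s t x, s != t -> mxbdiag L s x * mxbdiag P x t = 0.
Proof.
move=> LP0 s t x.
have [i [c ->]] := RankP s; have [j [d ->]] := RankP t.
have [k [a ->]] := RankP x => st.
have [ik|ik] := eqVneq i k; last by rewrite mxbdiag_Rank_neq ?mul0r.
have [kj|kj] := eqVneq k j; last by rewrite (mxbdiag_Rank_neq _ _ _ kj) mulr0.
by subst i j; rewrite !mxbdiag_Rank LP0 // -eq_Rank_same.
Qed.

Lemma generator_conj (R : realFieldType) n r (L : 'M[R]_(r, n)) (Ks : 'M[R]_n)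
    (P : 'M[R]_(n, r)) :
  col_stochastic L -> (forall x t, 0 <= P x t) ->
  (forall s t x, s != t -> L s x * P x t = 0) ->
  generator Ks -> generator (L *m Ks *m P).
Proof.
move=> [L_ge0 L_colsum1] P_ge0 LP0 [Ks_offdiag_ge0 Ks_colsum0]; split.
  move=> s t st; rewrite mxE; apply: sumr_ge0 => y _; rewrite mxE mulr_suml.
  apply: sumr_ge0 => x _; have [<-|xy] := eqVneq x y.
    by rewrite mulrAC LP0 ?mul0r.
  by rewrite mulr_ge0 ?mulr_ge0 ?Ks_offdiag_ge0.
move=> t; under eq_bigr do rewrite mxE.
rewrite exchange_big big1 // => y _; rewrite -mulr_suml.
suff -> : \sum_s (L *m Ks) s y = 0 by rewrite mul0r.
under eq_bigr do rewrite mxE.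
rewrite exchange_big -[RHS](Ks_colsum0 y); apply: eq_bigr => x _.
by rewrite -mulr_suml L_colsum1 mul1r.
Qed.

Theorem theorem2 (R : realFieldType) (l : nat) (m : 'I_l -> nat)
    (Kf : forall i : 'I_l, 'M[R]_(m i)) (Ks : 'M[R]_(\sum_i m i))
    (pi : forall i : 'I_l, {set 'I_(m i)} -> 'I_(m i) -> R) :
  generator (\mxdiag_(i < l) Kf i) ->
  generator Ks ->
  (forall i (C : {set 'I_(m i)}), C \in abs_classes (Kf i) ->
     stat_prob (Kf i) C (pi i C)) ->
  generator
    (mxbdiag (fun i => Lblk (Kf i)) *m Ks *m
     mxbdiag (fun i => Piblk (Kf i) (pi i))).
Proof.
move=> /mxdiag_generator Kf_gen Ks_gen pi_stat; apply: generator_conj Ks_gen.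
- apply: mxbdiag_col_stochastic => i; exact: Lblk_stochastic (Kf_gen i).
- apply: mxbdiag_ge0 => i; exact: Piblk_ge0 (pi_stat i).
- apply: mxbdiag_mulmx_offdiag => i c d x; exact: Lblk_Piblk_offdiag.
Qed.
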